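(* For every finite graph $G$ with at least one edge and $\mathrm{tww}(G)\geq 3$, and every positive integer $r$, \[ \mathrm{scol}_r(G)\leq 3\,(\mathrm{tww}(G)-1)^r\,\bar\omega(G). \]
   Context: $\bar\omega(G)$ denotes the maximum integer $s$ such that the complete bipartite graph $K_{s,s}$ is a subgraph of $G$. Twin-width: a trigraph is a vertex set together with two disjoint sets of edges, black and red. Contracting two vertices $x,y$ of a trigraph produces a trigraph in which $x,y$ are replaced by a new vertex $z$ adjacent to every other vertex $w$ adjacent (by any edge) to $x$ or to $y$; the edge $zw$ is black if $xw$ and $yw$ are both black edges, and red otherwise; all other edges are unchanged. A $d$-contraction sequence of an $n$-vertex graph $G$ is a sequence of trigraphs $\mathbf G_n,\dots,\mathbf G_1$ where $\mathbf G_n$ is $G$ with all edges black, each $\mathbf G_i$ is obtained from $\mathbf G_{i+1}$ by one contraction, $\mathbf G_1$ has a single vertex, and every vertex of every $\mathbf G_i$ is incident to at most $d$ red edges. The twin-width $\mathrm{tww}(G)$ is the minimum $d$ for which $G$ has a $d$-contraction sequence. Strong colouring number: for a linear order $L$ of $V(G)$, a vertex $u$ is strongly $r$-reachable from $v$ if there is a path of length at most $r$ between $u$ and $v$ with $u\le_L v$ and all inner vertices $w$ satisfying $v<_L w$; $\mathrm{Sreach}_r[L,v]$ is the set of such $u$ (including $v$), and $\mathrm{scol}_r(G)=\min_L\max_{v}|\mathrm{Sreach}_r[L,v]|$ over linear orders $L$ of $V(G)$. *)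

(* A finite simple graph is a symmetric irreflexive relation
   e on a finite type T. *)
From mathcomp Require Import all_boot.
Set Implicit Arguments. Unset Strict Implicit. Unset Printing Implicit Defensive.

Section Defs.
Variable T : finType.

Definition Kss (e : rel T) (A B : {set T}) : bool :=
  [&& #|A| == #|B|, [disjoint A & B] & [forall a in A, forall b in B, e a b]].

Definition omega_bar (e : rel T) : nat :=
  \max_(A : {set T} | [exists B : {set T}, Kss e A B]) #|A|.

(* A linear order L of V(G) is given by an injective rank function
   rk : T -> 'I_#|T| (u <=_L v iff rk u <= rk v). *)
(* u is strongly r-reachable from v: u <=_L v and there is a path
   v = p_0, p_1, ..., p_k = u with k <= r whose inner vertices w satisfy
   v <_L w.  The inner vertices are the k-1-tuple q. *)
Definition sreach (e : rel T) (rk : {ffun T -> 'I_#|T|}) (r : nat) (v u : T) : bool :=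
  (rk u <= rk v) &&
  ((u == v) ||
   [exists k : 'I_r, [exists q : k.-tuple T,
      [&& path e v (rcons q u), uniq (v :: rcons q u)
        & all (fun w => rk v < rk w) q]]]).

Definition Sreach (e : rel T) (rk : {ffun T -> 'I_#|T|}) (r : nat) (v : T) : {set T} :=
  [set u | sreach e rk r v u].

Definition scol (e : rel T) (r : nat) : nat :=
  \big[minn/#|T|]_(rk : {ffun T -> 'I_#|T|} | injectiveb rk)
     \max_(v : T) #|Sreach e rk r v|.

(* Vertices of the trigraphs are labelled by the set of original vertices they
   stand for (the contraction of x and y is labelled x :|: y).  Black and red
   edges are relations on labels; only pairs of current vertices matter. *)
Record trigraph := Trigraph {
  tverts : {set {set T}};
  tblack : rel {set T};
  tred   : rel {set T} }.

Definition init_trigraph (e : rel T) : trigraph :=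
  Trigraph [set [set v] | v : T]
    (fun A B => [exists u, exists w, [&& A == [set u], B == [set w] & e u w]])
    (fun _ _ => false).

Definition contract (G : trigraph) (x y : {set T}) : trigraph :=
  let z := x :|: y in
  let adj a w := tblack G a w || tred G a w in
  let zblack w := tblack G x w && tblack G y w in
  let zred w := (adj x w || adj y w) && ~~ zblack w in
  Trigraph (z |: (tverts G :\ x :\ y))
    (fun a b => if a == z then (b != z) && zblack b
                else if b == z then zblack a
                else tblack G a b)
    (fun a b => if a == z then (b != z) && zred b
                else if b == z then zred a
                else tred G a b).

Definition red_deg_le (d : nat) (G : trigraph) : Prop :=
  forall v, v \in tverts G -> #|[set w in tverts G | tred G v w]| <= d.

(* s = [:: G_n; ...; G_1] is a d-contraction sequence of the graph e *)
Definition contraction_seq (e : rel T) (d : nat) (s : seq trigraph) : Prop :=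
  let G0 := init_trigraph e in
  [/\ 0 < size s,
      nth G0 s 0 = init_trigraph e,
      #|tverts (last G0 s)| = 1,
      (forall i, i.+1 < size s ->
         exists x y, [/\ x \in tverts (nth G0 s i), y \in tverts (nth G0 s i),
                         x != y & nth G0 s i.+1 = contract (nth G0 s i) x y])
    & (forall i, i < size s -> red_deg_le d (nth G0 s i))].

Definition is_tww (e : rel T) (t : nat) : Prop :=
  (exists s, contraction_seq e t s) /\
  (forall d s, contraction_seq e d s -> t <= d).

End Defs.

From mathcomp Require Import all_boot zify.
Set Implicit Arguments. Unset Strict Implicit. Unset Printing Implicit Defensive.

(* Let w = omega_bar e and fix a d-contraction sequence G_0, ..., G_(m-1) of
   the graph; every trigraph in it is a partition of V(G) into blocks, a black
   edge meaning complete adjacency between two blocks.  Call a vertex big at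
   stage i when its block has more than w vertices, and let its big time be
   the first such stage.  Order the vertices by decreasing big time.  If u is
   strongly r-reachable from v and i is the big time of v, the inner vertices
   of the path are big at stage i while u is either born at stage i (at most
   2w such vertices: they lie in the two small blocks just merged) or still
   small.  In the latter case u lies in the witness set of some block at red
   distance <= r from the block of v: a small block itself, or the black
   neighbourhood of a big block, which has at most w vertices since it forms
   a biclique with that block.  A Moore-type count bounds the red ball by
   3 (d-1)^r - 2 blocks, giving |Sreach| <= 2w + (3 (d-1)^r - 2) w. *)

Lemma card_bigcup_le (I V : finType) (S : {pred I}) (f : I -> {set V}) :
  #|\bigcup_(i in S) f i| <= \sum_(i in S) #|f i|.
Proof.
apply: (big_ind2 (fun (X : {set V}) n => #|X| <= n)) => //; first by rewrite cards0.
move=> X1 n1 X2 n2 h1 h2; apply: leq_trans (leq_card_setU X1 X2) _.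
exact: leq_add.
Qed.

Lemma exists_subset_card (V : finType) (A : {set V}) k :
  k <= #|A| -> exists2 A' : {set V}, A' \subset A & #|A'| = k.
Proof.
elim: k => [|k IH] hk; first by exists set0; rewrite ?sub0set ?cards0.
have [A' sA' cA'] := IH (ltnW hk).
have : A :\: A' != set0.
  apply/negP => /eqP E; have := cardsID A' A; rewrite E cards0 addn0.
  rewrite (setIidPr sA') cA' => E2; lia.
case/set0Pn => b; rewrite inE => /andP [nb bA].
exists (b |: A'); first by rewrite subUset sub1set bA sA'.
by rewrite cardsU1 nb cA'.
Qed.

Lemma bigminn_le_idx (I : Type) (r : seq I) (P : pred I) (F : I -> nat) x :
  \big[minn/x]_(i <- r | P i) F i <= x.
Proof.
elim: r => [|a r IH]; rewrite ?big_nil ?big_cons //.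
by case: (P a) => //; apply: leq_trans (geq_minr _ _) IH.
Qed.

Lemma bigminn_le (I : eqType) (r : seq I) (P : pred I) (F : I -> nat) x j :
  j \in r -> P j -> \big[minn/x]_(i <- r | P i) F i <= F j.
Proof.
elim: r => [|a r IH] //; rewrite inE big_cons => /orP [/eqP <- -> | jr Pj].
  exact: geq_minl.
case: (P a); last exact: IH.
exact: leq_trans (geq_minr _ _) (IH jr Pj).
Qed.

(* The ball of radius j around X is built layer by
   layer; the Moore-type bound |ball r| + 2 <= 3 (d-1)^r (for d >= 3, r >= 1)
   is what turns the red degree of a contraction sequence into the factor
   3 (t-1)^r of the theorem. *)
Section Ball.
Variables (V : finType) (P : {set V}) (R : rel V) (d : nat).
Hypothesis R_sym : forall A B, A \in P -> B \in P -> R A B = R B A.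
Hypothesis R_deg : forall A, A \in P -> #|[set B in P | R A B]| <= d.
Variable X : V.
Hypothesis X_in : X \in P.

Fixpoint ball j : {set V} :=
  if j is j'.+1 then ball j' :|: [set B in P | [exists A in ball j', R A B]]
  else [set X].

Definition sphere j : {set V} := if j is j'.+1 then ball j :\: ball j' else ball 0.

Lemma ball_sub j : ball j \subset P.
Proof.
elim: j => [|j IH] /=; first by rewrite sub1set.
by rewrite subUset IH; apply/subsetP => B; rewrite inE => /andP [].
Qed.

Lemma ball_S j : ball j \subset ball j.+1.
Proof. by rewrite /= subsetUl. Qed.

Lemma ball_mono j k : j <= k -> ball j \subset ball k.
Proof.
move=> /subnK <-; elim: (k - j) => [|i IH] //=.
exact: subset_trans IH (ball_S _).
Qed.

Lemma ball_step j A B : A \in ball j -> B \in P -> R A B -> B \in ball j.+1.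
Proof.
move=> HA HB HR; rewrite /= inE; apply/orP; right.
by rewrite inE HB; apply/existsP; exists A; rewrite HA.
Qed.

Lemma ball_pred j B : B \in ball j.+1 -> B \notin ball j ->
  exists2 A, A \in ball j & R A B.
Proof.
rewrite /= inE => /orP [-> // | ].
by rewrite inE => /andP [_ /existsP [A /andP [h1 h2]]] _; exists A.
Qed.

Lemma card_ballS j : #|ball j.+1| = #|ball j| + #|sphere j.+1|.
Proof.
rewrite /sphere -(cardsID (ball j) (ball j.+1)).
by rewrite (setIidPr (ball_S j)).
Qed.

Lemma card_sphere1 : #|sphere 1| <= d.
Proof.
apply: leq_trans (R_deg X_in); apply: subset_leq_card; apply/subsetP => B.
move=> /setDP [B1 nB0].
have [A] := ball_pred B1 nB0; rewrite /= inE => /eqP -> RXB.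
by have := subsetP (ball_sub 1) B B1; rewrite inE => ->.
Qed.

(* Each vertex of a sphere of positive radius spends one of its d edges on
   the previous sphere, so it contributes at most d - 1 new vertices. *)
Lemma card_sphereS j : 0 < j -> #|sphere j.+1| <= (d - 1) * #|sphere j|.
Proof.
case: j => // j _.
set N := fun A => [set B in P | R A B] :\: ball j.+1.
have cover : sphere j.+2 \subset \bigcup_(A in sphere j.+1) N A.
  apply/subsetP => B /setDP [B2 nB].
  have [A A1 RAB] := ball_pred B2 nB.
  have BP := subsetP (ball_sub j.+2) B B2.
  apply/bigcupP; exists A.
    rewrite inE A1 andbT; apply/negP => A0.
    by move: nB; rewrite (ball_step A0 BP RAB).
  by rewrite /N in_setD nB in_set BP RAB.
apply: leq_trans (subset_leq_card cover) _.
apply: leq_trans (card_bigcup_le _ _) _.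
rewrite mulnC -sum_nat_const; apply: leq_sum => A /setDP [A1 nA0].
have [p p0 RpA] := ball_pred A1 nA0.
have AP := subsetP (ball_sub j.+1) A A1.
have pP := subsetP (ball_sub j) p p0.
have p_nbr : p \in [set B in P | R A B] by rewrite inE pP (R_sym AP pP).
have N_sub : N A \subset [set B in P | R A B] :\ p.
  apply/subsetP => B; rewrite /N in_setD => /andP [nB]; rewrite in_set => /andP [BP RAB].
  rewrite in_setD1 in_set BP RAB !andbT; apply/eqP => Bp; subst B.
  by move: nB; rewrite (subsetP (ball_S j) p p0).
apply: leq_trans (subset_leq_card N_sub) _.
by have := R_deg AP; rewrite (cardsD1 p _) p_nbr; lia.
Qed.

Lemma card_ball r : 0 < r -> 3 <= d -> #|ball r| + 2 <= 3 * (d - 1) ^ r.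
Proof.
case: r => // r _ d3.
suff [] : #|sphere r.+1| <= d * (d - 1) ^ r /\ #|ball r.+1| + 2 <= 3 * (d - 1) ^ r.+1 by [].
elim: r => [|r [IH1 IH2]].
  by have := card_sphere1; rewrite card_ballS /= cards1 expn1 expn0; split; lia.
have := card_sphereS (ltn0Sn r); rewrite card_ballS !expnS.
move: IH1 IH2; rewrite expnS; set Z := (d - 1) ^ r.
split; nia.
Qed.

End Ball.

Section PartitionTrigraph.
Variables (T : finType) (e : rel T).
Hypothesis e_sym : symmetric e.

Record partition_trigraph (G : trigraph T) : Prop := {
  part_nonempty : forall A, A \in tverts G -> A != set0;
  part_cover : forall a, exists2 A, A \in tverts G & a \in A;
  part_unique : forall A B a, A \in tverts G -> B \in tverts G ->
    a \in A -> a \in B -> A = B;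
  trigraph_sym : forall A B, A \in tverts G -> B \in tverts G ->
    tblack G A B = tblack G B A /\ tred G A B = tred G B A;
  black_complete : forall A B, A \in tverts G -> B \in tverts G -> A != B ->
    tblack G A B -> forall a b, a \in A -> b \in B -> e a b;
  edge_covered : forall A B a b, A \in tverts G -> B \in tverts G -> A != B ->
    a \in A -> b \in B -> e a b -> tblack G A B || tred G A B }.

Lemma partition_init : partition_trigraph (init_trigraph e).
Proof.
split => /=.
- by move=> A /imsetP [v _ ->]; apply/set0Pn; exists v; rewrite inE.
- by move=> a; exists [set a]; [apply: imset_f | rewrite inE].
- by move=> A B a /imsetP [u _ ->] /imsetP [w _ ->]; rewrite !inE => /eqP -> /eqP ->.
- move=> A B _ _; split => //.
  by apply/existsP/existsP => [] [u /existsP [w /and3P [h1 h2 h3]]];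
    exists w; apply/existsP; exists u; rewrite h1 h2 /= e_sym.
- move=> A B _ _ _ /existsP [u /existsP [w /and3P [/eqP -> /eqP -> euw]]] a b.
  by rewrite !inE => /eqP -> /eqP ->.
- move=> A B a b /imsetP [u _ ->] /imsetP [w _ ->] _; rewrite !inE => /eqP -> /eqP -> eab.
  by apply/orP; left; apply/existsP; exists u; apply/existsP; exists w; rewrite !eqxx.
Qed.

Section Contract.
Variable G : trigraph T.
Hypothesis HG : partition_trigraph G.
Variables x y : {set T}.
Hypotheses (Hx : x \in tverts G) (Hy : y \in tverts G).
Local Notation z := (x :|: y).
Local Notation G' := (contract G x y).

Lemma in_contract A : (A \in tverts G') =
   (A == z) || [&& A \in tverts G, A != x & A != y].
Proof. by rewrite /= !inE; case: (A \in tverts G); case: (A != x); case: (A != y). Qed.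

Lemma other_neq_merged A : A \in tverts G -> A != x -> A != y -> A != z.
Proof.
move=> HA Ax Ay; apply/eqP => Az.
have /set0Pn [a ax] := part_nonempty HG Hx.
have : a \in A by rewrite Az inE ax.
by move/(part_unique HG HA Hx)/(_ ax) => /eqP; rewrite (negbTE Ax).
Qed.

Variant contract_vertex_spec A : Prop :=
  | MergedVertex of A = z
  | OldVertex of A \in tverts G & A != x & A != y & A != z.

Lemma contract_vertexP A : A \in tverts G' -> contract_vertex_spec A.
Proof.
rewrite in_contract => /orP [/eqP -> | /and3P [HA Ax Ay]]; first exact: MergedVertex.
exact: OldVertex (other_neq_merged HA Ax Ay).
Qed.

Lemma old_block_disjoint A a : A \in tverts G -> A != x -> A != y ->
  a \in A -> a \in z -> False.
Proof.
move=> HA Ax Ay aA; rewrite inE => /orP [ax | ay].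
- by move: Ax; rewrite (part_unique HG HA Hx aA ax) eqxx.
- by move: Ay; rewrite (part_unique HG HA Hy aA ay) eqxx.
Qed.

Lemma partition_contract : partition_trigraph G'.
Proof.
have z_ne : z != set0.
  by have /set0Pn [a ax] := part_nonempty HG Hx; apply/set0Pn; exists a; rewrite inE ax.
split.
- by move=> A /contract_vertexP [-> // | HA _ _ _]; exact: part_nonempty HG A HA.
- move=> a; have [A HA aA] := part_cover HG a.
  have Gz : z \in tverts G' by rewrite in_contract eqxx.
  case: (eqVneq A x) => [EA | Ax]; first by exists z; rewrite // inE -EA aA.
  case: (eqVneq A y) => [EA | Ay]; first by exists z; rewrite // inE -EA aA orbT.
  by exists A; rewrite // in_contract HA Ax Ay orbT.
- move=> A B a /contract_vertexP [-> | HA Ax Ay _] /contract_vertexP [-> | HB Bx By _] //.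
  + by move=> az aB; case: (old_block_disjoint HB Bx By aB az).
  + by move=> aA az; case: (old_block_disjoint HA Ax Ay aA az).
  + exact: part_unique HG A B a HA HB.
- move=> A B /contract_vertexP [-> | HA _ _ Az] /contract_vertexP [-> | HB _ _ Bz] /=;
    rewrite ?eqxx ?(negbTE Az) ?(negbTE Bz) //.
  exact: trigraph_sym HG A B HA HB.
- move=> A B /contract_vertexP [-> | HA Ax Ay Az] /contract_vertexP [-> | HB Bx By Bz] /=;
    rewrite ?eqxx ?(negbTE Az) ?(negbTE Bz) //=.
  + move=> _ /andP [xB yB] a b; rewrite inE => /orP [ax | ay] bB.
    * by apply: (black_complete HG Hx HB _ xB) => //; rewrite eq_sym.
    * by apply: (black_complete HG Hy HB _ yB) => //; rewrite eq_sym.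
  + move=> _ /andP [xA yA] a b aA; rewrite inE e_sym => /orP [bx | by'].
    * by apply: (black_complete HG Hx HA _ xA) => //; rewrite eq_sym.
    * by apply: (black_complete HG Hy HA _ yA) => //; rewrite eq_sym.
  + exact: black_complete HG A B HA HB.
- move=> A B a b /contract_vertexP [-> | HA Ax Ay Az] /contract_vertexP [-> | HB Bx By Bz] /=;
    rewrite ?eqxx ?(negbTE Az) ?(negbTE Bz) //=.
  + move=> _ az bB eab; case: (_ && _) => //=.
    move: az; rewrite inE => /orP [ax | ay].
    * by rewrite (edge_covered HG Hx HB _ ax bB eab) // eq_sym.
    * by rewrite (edge_covered HG Hy HB _ ay bB eab) ?orbT // eq_sym.
  + move=> _ aA bz; rewrite e_sym => eba; case: (_ && _) => //=.
    move: bz; rewrite inE => /orP [bx | by'].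
    * by rewrite (edge_covered HG Hx HA _ bx aA eba) // eq_sym.
    * by rewrite (edge_covered HG Hy HA _ by' aA eba) ?orbT // eq_sym.
  + exact: edge_covered HG A B a b HA HB.
Qed.

End Contract.
End PartitionTrigraph.

Section Blocks.
Variables (T : finType) (e : rel T).
Hypothesis e_sym : symmetric e.

Definition block (G : trigraph T) (a : T) : {set T} :=
  odflt set0 [pick A in tverts G | a \in A].

Lemma blockP G a : partition_trigraph e G -> block G a \in tverts G /\ a \in block G a.
Proof.
move=> HG; rewrite /block; case: pickP => [A /andP [h1 h2] // | H].
have [A HA aA] := part_cover HG a.
by move: (H A); rewrite HA aA.
Qed.

Lemma blockE G A a : partition_trigraph e G -> A \in tverts G -> a \in A -> block G a = A.
Proof.
move=> HG HA aA; have [h1 h2] := blockP a HG.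
exact: (part_unique HG h1 HA h2 aA).
Qed.

Lemma blocks_disjoint G A B : partition_trigraph e G -> A \in tverts G -> B \in tverts G ->
  A != B -> [disjoint A & B].
Proof.
move=> HG HA HB AB; apply/pred0P => a /=; apply/negP => /andP [aA aB].
by move: AB; rewrite (part_unique HG HA HB aA aB) eqxx.
Qed.

Section Contract.
Variables (G : trigraph T) (x y : {set T}).
Hypotheses (HG : partition_trigraph e G) (Hx : x \in tverts G) (Hy : y \in tverts G).

Lemma block_contract a : block G a \subset block (contract G x y) a.
Proof.
have HG' := partition_contract e_sym HG Hx Hy.
have [h1 h2] := blockP a HG.
have Gz : x :|: y \in tverts (contract G x y) by rewrite in_contract // eqxx.
case: (eqVneq (block G a) x) => [E | nx].
  have az : a \in x :|: y by rewrite inE -E h2.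
  by rewrite (blockE HG' Gz az) E subsetUl.
case: (eqVneq (block G a) y) => [E | ny].
  have az : a \in x :|: y by rewrite inE -E h2 orbT.
  by rewrite (blockE HG' Gz az) E subsetUr.
by rewrite (blockE HG' _ h2) // in_contract // h1 nx ny orbT.
Qed.

Lemma block_contract_other a : block G a != x -> block G a != y ->
  block (contract G x y) a = block G a.
Proof.
move=> nx ny; have HG' := partition_contract e_sym HG Hx Hy.
have [h1 h2] := blockP a HG.
by rewrite (blockE HG' _ h2) // in_contract // h1 nx ny orbT.
Qed.

End Contract.

Lemma biclique_le_omega_bar (A B : {set T}) : [disjoint A & B] ->
  (forall a b, a \in A -> b \in B -> e a b) -> minn #|A| #|B| <= omega_bar e.
Proof.
move=> dAB cAB.
have [A' sA cA] := exists_subset_card (geq_minl #|A| #|B|).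
have [B' sB cB] := exists_subset_card (geq_minr #|A| #|B|).
rewrite -cA; apply: (@leq_bigmax_cond _ (fun A0 : {set T} => [exists B0, Kss e A0 B0])).
apply/existsP; exists B'; rewrite /Kss cA cB eqxx /= (disjointW sA sB dAB) /=.
apply/forallP => a; apply/implyP => aA; apply/forallP => b; apply/implyP => bB.
by apply: cAB; [apply: (subsetP sA) | apply: (subsetP sB)].
Qed.

(* A graph with an edge contains K_{1,1}. *)
Lemma omega_bar_pos u v : irreflexive e -> e u v -> 0 < omega_bar e.
Proof.
move=> e_irr euv.
have dis : [disjoint [set u] & [set v]].
  rewrite disjoints1 inE; apply: contraTneq euv => ->; by rewrite e_irr.
have cpl a b : a \in [set u] -> b \in [set v] -> e a b.
  by rewrite !inE => /eqP -> /eqP ->.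
by have := biclique_le_omega_bar dis cpl; rewrite !cards1.
Qed.

End Blocks.

Section RankOfKey.
Variables (T : finType) (key : T -> nat).

Definition key_rankn a := #|[set b | key b < key a]|.

Lemma key_rankn_lt a : key_rankn a < #|T|.
Proof.
have sub : [set b | key b < key a] \subset [set~ a].
  by apply/subsetP => b; rewrite !inE; apply: contraTneq => ->; rewrite ltnn.
have := subset_leq_card sub; rewrite cardsC1 /key_rankn.
have : 0 < #|T| by apply/card_gt0P; exists a.
lia.
Qed.

Lemma key_rankn_mono a b : key a < key b -> key_rankn a < key_rankn b.
Proof.
move=> h; rewrite /key_rankn.
have ab : a \in [set c | key c < key b] by rewrite inE.
rewrite (cardsD1 a [set c | key c < key b]) ab add1n ltnS.
apply: subset_leq_card; apply/subsetP => c; rewrite !inE => hc.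
by rewrite (ltn_trans hc h) andbT; apply: contraTneq hc => ->; rewrite ltnn.
Qed.

Definition key_rank : {ffun T -> 'I_#|T|} := [ffun a => Ordinal (key_rankn_lt a)].

Lemma key_rank_inj : injective key -> injectiveb key_rank.
Proof.
move=> key_inj; apply/injectiveP => a b /(congr1 val); rewrite !ffunE /=.
case: (ltngtP (key a) (key b)) => [h | h | /key_inj //] E.
- by have := key_rankn_mono h; rewrite E ltnn.
- by have := key_rankn_mono h; rewrite E ltnn.
Qed.

Lemma key_rank_le a b : key_rank a <= key_rank b -> key a <= key b.
Proof.
rewrite !ffunE /= => h; rewrite leqNgt; apply/negP => lt.
by have := key_rankn_mono lt; lia.
Qed.

End RankOfKey.

Section ContractionSequence.
Variables (T : finType) (e : rel T).
Hypothesis e_sym : symmetric e.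
Variables (d : nat) (s : seq (trigraph T)).
Hypothesis Hs : contraction_seq e d s.

Local Notation m := (size s).
Local Notation w := (omega_bar e).

Definition stage i := nth (init_trigraph e) s i.

Lemma stage_step i : i.+1 < m -> exists x y, [/\ x \in tverts (stage i),
  y \in tverts (stage i), x != y & stage i.+1 = contract (stage i) x y].
Proof. by case: Hs => _ _ _ Hstep _; exact: Hstep. Qed.

Lemma stage_partition i : i < m -> partition_trigraph e (stage i).
Proof.
case: Hs => _ H0 _ _ _.
elim: i => [|i IH] hi; first by rewrite /stage H0; exact: partition_init.
have [x [y [Hx Hy _ ->]]] := stage_step hi.
exact: (partition_contract e_sym (IH (ltnW hi)) Hx Hy).
Qed.

Lemma stage_red_deg i : i < m -> red_deg_le d (stage i).
Proof. by case: Hs => _ _ _ _ H; exact: H. Qed.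

Definition is_big i a := w < #|block (stage i) a|.

Lemma is_big_mono i j a : i <= j -> j < m -> is_big i a -> is_big j a.
Proof.
move=> /subnK <-; elim: (j - i) => [|k IH] //= hk hb.
have [x [y [Hx Hy _ E]]] := stage_step hk.
have HG := stage_partition (ltnW hk).
rewrite /is_big addSn E; apply: leq_trans (IH (ltnW hk) hb) _.
exact/subset_leq_card/(block_contract e_sym HG Hx Hy).
Qed.

(* In the last stage the only block is the whole vertex set. *)
Lemma is_big_last a : w < #|T| -> is_big m.-1 a.
Proof.
move=> hw; case: Hs => m0 _ H1 _ _.
have HG : partition_trigraph e (stage m.-1) by apply: stage_partition; rewrite ltn_predL.
have [h1 _] := blockP a HG.
rewrite /is_big; suff -> : block (stage m.-1) a = setT by rewrite cardsT.
apply/setP => b; rewrite inE.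
have [k1 k2] := blockP b HG.
move: H1; rewrite -nth_last -/(stage _) => /eqP/cards1P [S ES].
by move: h1 k1; rewrite ES !inE => /eqP -> /eqP <-.
Qed.

(* In the first stage all blocks are singletons. *)
Lemma not_big_first a : 0 < w -> ~~ is_big 0 a.
Proof.
case: Hs => m0 H0 _ _ _ hw.
have HG := stage_partition m0.
rewrite /is_big (@blockE _ e (stage 0) [set a]) ?inE //.
- by rewrite cards1 -leqNgt.
- by rewrite /stage H0; apply: imset_f.
Qed.

(* The first stage at which a is big (or m if there is none). *)
Definition big_time a := find (is_big^~ a) (iota 0 m).

Section AtStage.
Variable i : nat.
Hypothesis hi : i < m.
Local Notation Gi := (stage i).
Local Notation red_ball X := (ball (tverts Gi) (tred Gi) X).

Definition black_nbhd (A : {set T}) : {set T} :=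
  [set b | [exists B in tverts Gi, [&& B != A, tblack Gi A B & b \in B]]].

Definition witness (A : {set T}) : {set T} := if w < #|A| then black_nbhd A else A.

(* A big block is complete to its black neighbourhood, so the latter has at
   most w vertices. *)
Lemma card_witness A : A \in tverts Gi -> #|witness A| <= w.
Proof.
move=> HA; rewrite /witness; case: ltnP => // big_A.
have HG := stage_partition hi.
have dis : [disjoint A & black_nbhd A].
  apply/pred0P => b /=; apply/negP => /andP [bA].
  rewrite inE => /existsP [B /andP [HB /and3P [BA _ bB]]].
  by move: BA; rewrite (part_unique HG HA HB bA bB) eqxx.
have cpl : forall a b, a \in A -> b \in black_nbhd A -> e a b.
  move=> a b aA; rewrite inE => /existsP [B /andP [HB /and3P [BA blk bB]]].
  by apply: (black_complete HG HA HB _ blk aA bB); rewrite eq_sym.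
by have := biclique_le_omega_bar dis cpl; lia.
Qed.

(* Two distinct big blocks cannot be black-adjacent (that would give a
   biclique larger than w), so an e-edge between big vertices stays within
   the block or follows a red edge. *)
Lemma big_edge_ball X j x c : is_big i x -> is_big i c -> e x c ->
  block Gi x \in red_ball X j -> block Gi c \in red_ball X j.+1.
Proof.
move=> big_x big_c exc xB; have HG := stage_partition hi.
have [hx1 hx2] := blockP x HG; have [hc1 hc2] := blockP c HG.
case: (eqVneq (block Gi x) (block Gi c)) => [<- | neq]; first exact: (subsetP (ball_S _ _ _ _)).
case/orP: (edge_covered HG hx1 hc1 neq hx2 hc2 exc) => [blk | red].
  have := biclique_le_omega_bar (blocks_disjoint HG hx1 hc1 neq) (black_complete HG hx1 hc1 neq blk).
  by rewrite /is_big in big_x big_c; lia.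
exact: ball_step xB hc1 red.
Qed.

(* An e-edge from a big vertex to a small one ends in the witness set of the
   big block (black edge) or of the small block (red edge). *)
Lemma big_small_edge X j x u : is_big i x -> ~~ is_big i u -> e x u ->
  block Gi x \in red_ball X j -> u \in \bigcup_(A in red_ball X j.+1) witness A.
Proof.
rewrite /is_big => big_x small_u exu xB; have HG := stage_partition hi.
have [hx1 hx2] := blockP x HG; have [hu1 hu2] := blockP u HG.
have neq : block Gi x != block Gi u by apply: contraNneq small_u => <-.
case/orP: (edge_covered HG hx1 hu1 neq hx2 hu2 exu) => [blk | red].
- apply/bigcupP; exists (block Gi x); first exact: (subsetP (ball_S _ _ _ _)).
  rewrite /witness big_x inE; apply/existsP; exists (block Gi u).
  by rewrite hu1 eq_sym neq blk hu2.
- apply/bigcupP; exists (block Gi u); first exact: ball_step xB hu1 red.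
  by rewrite /witness (negbTE small_u).
Qed.

Lemma path_to_small X u q x j : is_big i x -> block Gi x \in red_ball X j ->
  all (is_big i) q -> path e x (rcons q u) -> ~~ is_big i u ->
  u \in \bigcup_(A in red_ball X (j + size q).+1) witness A.
Proof.
elim: q x j => [|c q IH] x j big_x xB /=.
  by rewrite andbT addn0 => _ exu small_u; exact: big_small_edge small_u exu xB.
move=> /andP [big_c all_q] /andP [exc pq] small_u.
have cB := big_edge_ball big_x big_c exc xB.
by have := IH c j.+1 big_c cB all_q pq small_u; rewrite addSnnS.
Qed.

End AtStage.

(* The linear order: decreasing big time, ties broken arbitrarily. *)
Definition order_key a := (m - big_time a) * #|T| + enum_rank a.

Lemma order_key_inj : injective order_key.
Proof.
move=> a b E.
have : order_key a %% #|T| = order_key b %% #|T| by rewrite E.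
rewrite /order_key !modnMDl !modn_small ?ltn_ord // => E2.
exact/enum_rank_inj/val_inj.
Qed.

Definition order : {ffun T -> 'I_#|T|} := key_rank order_key.

Lemma order_inj : injectiveb order.
Proof. exact: key_rank_inj order_key_inj. Qed.

(* When w < |T| every vertex is big in the last stage, so its big time is a
   genuine stage; the remaining lemmas need this. *)
Section NotAllSmall.
Hypothesis w_lt : w < #|T|.

Lemma has_big a : has (is_big^~ a) (iota 0 m).
Proof.
case: Hs => m0 _ _ _ _.
by apply/hasP; exists m.-1; [rewrite mem_iota add0n ltn_predL m0 | exact: is_big_last].
Qed.

Lemma big_time_lt a : big_time a < m.
Proof. by have := has_big a; rewrite has_find size_iota. Qed.

Lemma big_time_big a : is_big (big_time a) a.
Proof. by have := nth_find 0 (has_big a); rewrite nth_iota ?add0n //; exact: big_time_lt. Qed.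

Lemma small_before_big_time a j : j < big_time a -> ~~ is_big j a.
Proof.
move=> hj; have := before_find 0 hj; rewrite nth_iota ?add0n => [->//|].
exact: ltn_trans hj (big_time_lt a).
Qed.

Lemma big_time_pos a : 0 < w -> 0 < big_time a.
Proof.
move=> hw; case E: (big_time a) => //.
by have := big_time_big a; rewrite E (negbTE (not_big_first a hw)).
Qed.

(* At most 2w vertices become big at a given positive stage: they lie in one
   of the two blocks contracted just before, both of which were small. *)
Lemma card_born_at i : 0 < i -> i < m -> #|[set a | big_time a == i]| <= w + w.
Proof.
case: i => // i _ hi.
have [x [y [Hx Hy _ E]]] := stage_step hi.
have HG := stage_partition (ltnW hi).
pose small (A : {set T}) := if w < #|A| then set0 else A.
have card_small A : #|small A| <= w.
  by rewrite /small; case: ltnP; rewrite ?cards0.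
have sub : [set a | big_time a == i.+1] \subset small x :|: small y.
  apply/subsetP => a; rewrite inE => /eqP ta.
  have big1 := big_time_big a; rewrite ta in big1.
  have small0 : ~~ is_big i a by apply: small_before_big_time; rewrite ta.
  have [_ h2] := blockP a HG.
  case: (eqVneq (block (stage i) a) x) => [ex | nx].
    by move: small0; rewrite /is_big ex !inE /small => /negbTE ->; rewrite -ex h2.
  case: (eqVneq (block (stage i) a) y) => [ey | ny].
    by move: small0; rewrite /is_big ey !inE /small => /negbTE ->; rewrite -ey h2 orbT.
  move: big1; rewrite /is_big E (block_contract_other e_sym HG Hx Hy nx ny) => big1.
  by move: small0; rewrite /is_big big1.
apply: leq_trans (subset_leq_card sub) _.
apply: leq_trans (leq_card_setU _ _) _.
by apply: leq_add; apply: card_small.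
Qed.

Lemma order_key_big_time a b : big_time a < big_time b -> order_key b < order_key a.
Proof.
move=> h; have hb := big_time_lt b.
have eb : nat_of_ord (enum_rank b) < #|T| := ltn_ord (enum_rank b).
rewrite /order_key.
have : (m - big_time b).+1 * #|T| <= (m - big_time a) * #|T| by apply: leq_mul; lia.
rewrite mulSn; lia.
Qed.

Lemma order_big_time a b : order a <= order b -> big_time b <= big_time a.
Proof.
move/key_rank_le => le_key; rewrite leqNgt; apply/negP.
by move/order_key_big_time; rewrite ltnNge le_key.
Qed.

(* With i the big time of v: every vertex strongly r-reachable from v became
   big at stage i as well, or is witnessed by a block at red distance at most
   r from the block of v in stage i.  Indeed a later vertex u is small at
   stage i, and the inner vertices of the path, being earlier than v in the
   order, are already big at stage i. *)
Lemma sreach_cover v r (i := big_time v) :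
  Sreach e order r v \subset [set a | big_time a == i] :|:
    \bigcup_(A in ball (tverts (stage i)) (tred (stage i)) (block (stage i) v) r) witness i A.
Proof.
have hi : i < m := big_time_lt v.
apply/subsetP => u; rewrite /Sreach inE /sreach => /andP [ruv reach].
rewrite in_setU in_set; case: (eqVneq (big_time u) i) => //= ntu.
have small_u : ~~ is_big i u.
  by apply: small_before_big_time; have := order_big_time ruv; rewrite -/i; lia.
case/orP: reach => [/eqP uv | /existsP [k /existsP [q /and3P [pth _ later]]]].
  by move: ntu; rewrite uv eqxx.
have big_q : all (is_big i) q.
  apply/allP => c cq; have /= vc := allP later c cq.
  exact: is_big_mono (order_big_time (ltnW vc)) hi (big_time_big c).
have vB : block (stage i) v \in ball (tverts (stage i)) (tred (stage i)) (block (stage i) v) 0.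
  by rewrite /= inE.
have := path_to_small hi (big_time_big v) vB big_q pth small_u.
rewrite size_tuple add0n => /bigcupP [A hA uA]; apply/bigcupP; exists A => //.
exact: (subsetP (ball_mono _ _ _ (ltn_ord k))).
Qed.

(* Counting the cover: at most 2w vertices share the big time of v, and the
   red ball contributes at most (3 (d-1)^r - 2) witness sets of size <= w. *)
Lemma card_sreach v r : 0 < r -> 3 <= d -> 0 < w ->
  #|Sreach e order r v| <= 3 * (d - 1) ^ r * w.
Proof.
move=> r_pos d_ge3 w_pos.
set i := big_time v; have hi : i < m := big_time_lt v.
have HG := stage_partition hi.
have [v_block _] := blockP v HG.
have red_sym A B : A \in tverts (stage i) -> B \in tverts (stage i) ->
    tred (stage i) A B = tred (stage i) B A.
  by move=> hA hB; case: (trigraph_sym HG hA hB).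
have card_red_ball := card_ball red_sym (stage_red_deg hi) v_block r_pos d_ge3.
set Bl := ball _ _ _ r in card_red_ball.
have card_born := card_born_at (big_time_pos v w_pos) hi.
have card_witnesses : #|\bigcup_(A in Bl) witness i A| <= #|Bl| * w.
  apply: leq_trans (card_bigcup_le _ _) _; rewrite -sum_nat_const.
  apply: leq_sum => A hA; apply: (card_witness hi).
  exact: (subsetP (ball_sub (tred (stage i)) v_block r) A hA).
apply: leq_trans (subset_leq_card (sreach_cover v r)) _.
apply: leq_trans (leq_card_setU _ _) _.
have := leq_mul card_red_ball (leqnn w); rewrite mulnDl.
by move: card_born card_witnesses; rewrite -/i -/Bl; lia.
Qed.

End NotAllSmall.
End ContractionSequence.

Lemma scol_le_card (T : finType) (e : rel T) r : scol e r <= #|T|.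
Proof. exact: bigminn_le_idx. Qed.

Lemma scol_le_order (T : finType) (e : rel T) r (rk : {ffun T -> 'I_#|T|}) :
  injectiveb rk -> scol e r <= \max_(v : T) #|Sreach e rk r v|.
Proof. by move=> rk_inj; apply: bigminn_le (mem_index_enum rk) rk_inj. Qed.

Theorem corollary3 (T : finType) (e : rel T)
  (e_sym : symmetric e) (e_irr : irreflexive e)
  (has_edge : exists u v, e u v)
  (t : nat) (t_tww : is_tww e t) (t_ge3 : 3 <= t)
  (r : nat) (r_pos : 0 < r) :
  scol e r <= 3 * (t - 1) ^ r * omega_bar e.
Proof.
have [u [v euv]] := has_edge.
have w_pos := omega_bar_pos e_irr euv.
have [[s Hs] _] := t_tww.
case: (leqP #|T| (omega_bar e)) => [all_small | w_lt].
  have : 0 < (t - 1) ^ r by rewrite expn_gt0 subn_gt0 (leq_trans _ t_ge3).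
  by have := scol_le_card e r; nia.
apply: leq_trans (scol_le_order e r (order_inj e s)) _.
by apply/bigmax_leqP => a _; exact: (card_sreach e_sym Hs w_lt a r_pos t_ge3 w_pos).
Qed.
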